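(* For every pair of compatible counting-star formulas $C_1,C_2$, the formula $\big(\bigvee_{C_3:\ \mathrm{ERes}(C_1,C_2,C_3)}C_3\big)\Rightarrow (C_1*C_2)$ is valid, i.e. every $L$-environment satisfying some counting-star formula $C_3$ with $\mathrm{ERes}(C_1,C_2,C_3)$ satisfies $C_1*C_2$.
   Context: BASE. Fix a finite vocabulary $L=\mathcal A\cup\mathcal F$ ($\mathcal A$ unary, $\mathcal F$ binary predicate symbols); equality is a logical symbol not in $\mathcal F$, always interpreted as identity. Formulas: first-order logic with equality, counting quantifiers $\exists^{\ge k}x.G$, $\exists^{=k}x.G$, and spatial conjunction $*$. An environment has a finite nonempty domain $D$, interpretations of the predicate symbols, and an assignment to variables. $\mathrm{split}\,e\,[e_1,\dots,e_r]$ (same domain, same variable assignment) holds iff for each predicate symbol $P$, $e(P)$ is the disjoint union of the $e_i(P)$; $[\![G_1*G_2]\!]e$ holds iff some $e_1,e_2$ with $\mathrm{split}\,e\,[e_1,e_2]$ satisfy $[\![G_1]\!]e_1$, $[\![G_2]\!]e_2$. $G\sim H$ means equal truth values in all environments. NORMAL FORMS. Atoms over distinct variables $u_1,\dots,u_p$ are $A(u_i)$, $f(u_i,u_j)$, $u_i=u_j$; a GCCAT formula over them contains for each such atom exactly one of the atom or its negation (nothing else), with $u_i=u_j$ positive iff $i=j$. Fix distinct $x_1,\dots,x_n$ and $x$. $\mathrm{ext}(x_1,\dots,x_n;x)$ is the set of conjunctions containing, for each atom over $x,x_1,\dots,x_n$ containing $x$, exactly one of the atom or its negation, with $x=x$ positive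 and $x=x_i$, $x_i=x$ negated. For $p\ge1$, $C_p=\{0,\dots,p-1,p^+\}$; $\exists^{c}x.G$ means $\exists^{=c}x.G$ for integer $c$ and $\exists^{\ge p}x.G$ for $c=p^+$. A counting-star formula is $C=E\wedge F\wedge\bigwedge_{i=1}^{k}\exists^{s_i}x.F'_i$ with $E=\bigwedge_{j=1}^m y_j=x_{i_j}$ ($y_j$ distinct variables not among $x,x_1,\dots,x_n$), $F$ GCCAT over $x_1,\dots,x_n$, $F'_1,\dots,F'_k$ an enumeration of $\mathrm{ext}(x_1,\dots,x_n;x)$, $s_i\in C_q$ for some $q\ge2$. Two counting-star formulas are compatible if they have the same equality part $E$ and GCCAT parts over the same $x_1,\dots,x_n$. OPERATIONS. $\mathrm{Pos}(T)$ is the set of non-equality positive literals of a conjunction $T$. For $T_1,T_2\in\mathrm{ext}$, $T_1\oplus T_2$ is defined iff $\mathrm{Pos}(T_1)\cap\mathrm{Pos}(T_2)=\emptyset$ and is the unique $T\in\mathrm{ext}$ with $\mathrm{Pos}(T)=\mathrm{Pos}(T_1)\cup\mathrm{Pos}(T_2)$; for GCCAT $F_1,F_2$ over $x_1,\dots,x_n$, $F_1\otimes F_2$ is defined iff $\mathrm{Pos}(F_1)\cap\mathrm{Pos}(F_2)=\emptyset$ and is the unique GCCAT $F$ with $\mathrm{Pos}(F)=\mathrm{Pos}(F_1)\cup\mathrm{Pos}(F_2)$. TRANSLATION. $L'=L\cup\{B_1,B_2\}$ (new unary symbols, split by $*$ like all others). $\mathrm{Mark}_\emptyset(x)=\neg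 B_1(x)\wedge\neg B_2(x)$, $\mathrm{Mark}_{\{1\}}(x)=B_1(x)\wedge\neg B_2(x)$, $\mathrm{Mark}_{\{2\}}(x)=\neg B_1(x)\wedge B_2(x)$, $\mathrm{Mark}_{\{1,2\}}(x)=B_1(x)\wedge B_2(x)$. $\mathcal E_0$: GCCAT over $x_1,\dots,x_n$ whose only positive literals are $x_i=x_i$; $\varnothing_x$: element of $\mathrm{ext}$ whose only positive literal is $x=x$; $\delta(x):=\bigwedge_i x\ne x_i$. $G_E:=\mathcal E_0\wedge\forall x.(\delta(x)\to\varnothing_x\wedge\mathrm{Mark}_\emptyset(x))$; $K(F):=F\wedge\forall x.(\delta(x)\to\varnothing_x\wedge\mathrm{Mark}_\emptyset(x))$; $\mathrm{Any}_m(T):=\mathcal E_0\wedge\forall x.(\delta(x)\to(T\wedge\mathrm{Mark}_m(x))\vee(\varnothing_x\wedge\mathrm{Mark}_\emptyset(x)))$; $\mathrm{One}_m(T):=\mathrm{Any}_m(T)\wedge\exists^{=1}x.(\delta(x)\wedge T\wedge\mathrm{Mark}_m(x))$. $X_m(\exists^{0}x.T):=G_E$, $X_m(\exists^{i+1}x.T):=\mathrm{One}_m(T)*X_m(\exists^{i}x.T)$, $X_m(\exists^{p^+}x.T):=X_m(\exists^{p}x.T)*\mathrm{Any}_m(T)$. $S_m(C):=E\wedge\big(K(F)*X_m(\exists^{s_1}x.F'_1)*\dots*X_m(\exists^{s_k}x.F'_k)\big)$. RULES (when $T_1\oplus T_2$ is defined): (1) $\mathrm{One}_{\{1\}}(T_1)*\mathrm{One}_{\{2\}}(T_2)\to\mathrm{One}_{\{1,2\}}(T_1\oplus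 T_2)$; (2) $\mathrm{One}_{\{1\}}(T_1)*\mathrm{Any}_{\{2\}}(T_2)\to\mathrm{One}_{\{1,2\}}(T_1\oplus T_2)*\mathrm{Any}_{\{2\}}(T_2)$; (3) $\mathrm{Any}_{\{1\}}(T_1)*\mathrm{One}_{\{2\}}(T_2)\to\mathrm{Any}_{\{1\}}(T_1)*\mathrm{One}_{\{1,2\}}(T_1\oplus T_2)$; (4) $\mathrm{Any}_{\{1\}}(T_1)*\mathrm{Any}_{\{2\}}(T_2)\to\mathrm{Any}_{\{1\}}(T_1)*\mathrm{Any}_{\{2\}}(T_2)*\mathrm{Any}_{\{1,2\}}(T_1\oplus T_2)$; (5) $\mathrm{Any}_{\{1\}}(T)\to G_E$; (6) $\mathrm{Any}_{\{2\}}(T)\to G_E$. DERIVATION. For compatible $C_1=E\wedge F_1\wedge\dots$, $C_2=E\wedge F_2\wedge\dots$, write $S_{\{1\}}(C_1)*S_{\{2\}}(C_2)$ as $E\wedge W$ where $W$ is the spatial conjunction of $K(F_1)$, $K(F_2)$ and all (unfolded) $\mathrm{One}_m$, $\mathrm{Any}_m$, $G_E$ conjuncts of the $X_{\{1\}}$ and $X_{\{2\}}$ parts. $E\wedge H$ is a derivation result if $H$ is obtained from $W$ by: first replacing $K(F_1)*K(F_2)$ by $K(F_1\otimes F_2)$ if defined, else by $\mathit{false}$; then applying finitely many rule instances of (1)–(6) to spatial sub-conjunctions, modulo associativity and commutativity of $*$, the unit law $G*G_E\sim G$ and idempotence $\mathrm{Any}_m(T)*\mathrm{Any}_m(T)\sim\mathrm{Any}_m(T)$,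 with all applications of (1)–(4) preceding those of (5)–(6); and such that finally, apart from the $K$-conjunct, $H$ contains only conjuncts $\mathrm{One}_{\{1,2\}}(T)$ and $\mathrm{Any}_{\{1,2\}}(T)$. $\mathrm{ERes}(C_1,C_2,C_3)$ holds for a counting-star formula $C_3$ (same variables, same $E$) iff $S_{\{1,2\}}(C_3)$ coincides, modulo the same identifications, with some derivation result of $S_{\{1\}}(C_1)*S_{\{2\}}(C_2)$. *)

From Stdlib Require Import Relations Permutation.
From mathcomp Require Import all_boot.
Set Implicit Arguments. Unset Strict Implicit. Unset Printing Implicit Defensive.

Inductive form (A F : Type) : Type :=
| FTrue | FFalse
| Un (a : A) (x : nat)
| Bin (f : F) (x y : nat)
| Eq (x y : nat)
| Not (g : form A F)
| And (g h : form A F)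
| Or (g h : form A F)
| Imp (g h : form A F)
| Ex (x : nat) (g : form A F)
| All (x : nat) (g : form A F)
| ExGe (k : nat) (x : nat) (g : form A F)
| ExEq (k : nat) (x : nat) (g : form A F)
| Star (g h : form A F).
Arguments FTrue {A F}. Arguments FFalse {A F}. Arguments Un {A F}.
Arguments Bin {A F}. Arguments Eq {A F}. Arguments Not {A F}. Arguments And {A F}.
Arguments Or {A F}. Arguments Imp {A F}. Arguments Ex {A F}. Arguments All {A F}.
Arguments ExGe {A F}. Arguments ExEq {A F}. Arguments Star {A F}.

(* Semantics.  An environment: a finite domain D (nonempty, since the *)
(* assignment rho : nat -> D is total), interpretations of unary and   *)
(* binary symbols, and an assignment.                                 *)
Definition upd (D : Type) (rho : nat -> D) (y : nat) (d : D) : nat -> D :=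
  fun z => if z == y then d else rho z.

Definition splitU (A D : finType) (u u1 u2 : {ffun A -> {set D}}) : bool :=
  [forall a, (u a == u1 a :|: u2 a) && [disjoint u1 a & u2 a]].
Definition splitB (F D : finType) (b b1 b2 : {ffun F -> {set D * D}}) : bool :=
  [forall f, (b f == b1 f :|: b2 f) && [disjoint b1 f & b2 f]].

Fixpoint sat (A F D : finType) (u : {ffun A -> {set D}}) (b : {ffun F -> {set D * D}})
    (rho : nat -> D) (g : form A F) {struct g} : bool :=
  match g with
  | FTrue => true
  | FFalse => false
  | Un a y => rho y \in u a
  | Bin f y z => (rho y, rho z) \in b f
  | Eq y z => rho y == rho z
  | Not g1 => ~~ sat u b rho g1
  | And g1 g2 => sat u b rho g1 && sat u b rho g2
  | Or g1 g2 => sat u b rho g1 || sat u b rho g2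
  | Imp g1 g2 => sat u b rho g1 ==> sat u b rho g2
  | Ex y g1 => [exists d : D, sat u b (upd rho y d) g1]
  | All y g1 => [forall d : D, sat u b (upd rho y d) g1]
  | ExGe k y g1 => k <= #|[set d : D | sat u b (upd rho y d) g1]|
  | ExEq k y g1 => #|[set d : D | sat u b (upd rho y d) g1]| == k
  | Star g1 g2 =>
      [exists u1 : {ffun A -> {set D}}, exists u2 : {ffun A -> {set D}},
       exists b1 : {ffun F -> {set D * D}}, exists b2 : {ffun F -> {set D * D}},
         [&& splitU u u1 u2, splitB b b1 b2, sat u1 b1 rho g1 & sat u2 b2 rho g2]]
  end.

(* Atoms and normal forms over fixed distinct variables x1..xn (xs) and *)
(* x.  A GCCAT formula / an element of ext(x1..xn;x) is determined by  *)
(* its set Pos of positive non-equality literals; we represent it by   *)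
(* that set and build the formula explicitly.                          *)
Notation gatom A F n := ((A * 'I_n) + (F * ('I_n * 'I_n)))%type.
(* non-equality atoms over x,x1..xn containing x:
   A(x), f(x,x), f(x,x_i), f(x_i,x) *)
Notation xatom A F n := ((((A + F) + (F * 'I_n)) + (F * 'I_n)))%type.

Definition bigAnd (A F : Type) (l : seq (form A F)) : form A F := foldr (@And A F) FTrue l.
Definition lit (A F : Type) (b : bool) (g : form A F) : form A F := if b then g else Not g.

Section Builders.
Variables (A F : finType) (n : nat) (xs : n.-tuple nat) (x : nat).

Definition gatom_form (a : gatom A F n) : form A F :=
  match a with
  | inl (p, i) => Un p (tnth xs i)
  | inr (f, (i, j)) => Bin f (tnth xs i) (tnth xs j)
  end.

Definition gform (P : {set gatom A F n}) : form A F :=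
  bigAnd ([seq lit (a \in P) (gatom_form a) | a <- enum [set: gatom A F n]] ++
          [seq lit (i == j) (@Eq A F (tnth xs i) (tnth xs j)) | i <- enum 'I_n, j <- enum 'I_n]).

Definition xatom_form (a : xatom A F n) : form A F :=
  match a with
  | inl (inl (inl p)) => Un p x
  | inl (inl (inr f)) => Bin f x x
  | inl (inr (f, i)) => Bin f x (tnth xs i)
  | inr (f, i) => Bin f (tnth xs i) x
  end.

Definition xform (T : {set xatom A F n}) : form A F :=
  bigAnd ([seq lit (a \in T) (xatom_form a) | a <- enum [set: xatom A F n]] ++
          [:: Eq x x] ++
          [seq Not (@Eq A F x (tnth xs i)) | i <- enum 'I_n] ++
          [seq Not (@Eq A F (tnth xs i) x) | i <- enum 'I_n]).
End Builders.

(* T1 (+) T2 and F1 (x) F2 : defined iff Pos sets are disjoint *)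
Definition oplus (X : finType) (T1 T2 : {set X}) : option {set X} :=
  if [disjoint T1 & T2] then Some (T1 :|: T2) else None.

(* CEq j : exists^{=j};  CGe p : exists^{>=p} (the value p^+ of C_p) *)
Inductive cnt := CEq (j : nat) | CGe (p : nat).

(* a counting-star formula (with the globally fixed x1..xn, x and E):
   its GCCAT part F and the counts s_T for every T in ext *)
Record cstar (A F : finType) (n : nat) := CStar {
  cs_F : {set gatom A F n};
  cs_s : {set xatom A F n} -> cnt }.

Definition cs_wf (A F : finType) (n : nat) (C : cstar A F n) : Prop :=
  exists q, 2 <= q /\
    forall T, match cs_s C T with CEq j => j < q | CGe p => p == q end.

Definition E_wf (n : nat) (xs : n.-tuple nat) (x : nat) (E : seq (nat * 'I_n)) : Prop :=
  uniq (map fst E) /\ forall e, e \in E -> e.1 \notin (x :: xs).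

Section CStarForm.
Variables (A F : finType) (n : nat) (xs : n.-tuple nat) (x : nat) (E : seq (nat * 'I_n)).

Definition Eform : form A F := bigAnd [seq @Eq A F e.1 (tnth xs e.2) | e <- E].

Definition cnt_form (c : cnt) (g : form A F) : form A F :=
  match c with CEq j => ExEq j x g | CGe p => ExGe p x g end.

Definition cs_form (C : cstar A F n) : form A F :=
  And Eform (And (gform xs (cs_F C))
    (bigAnd [seq cnt_form (cs_s C T) (xform xs x T) | T <- enum [set: {set xatom A F n}]])).
End CStarForm.

(* The translation S_m (over L' = L + {B1,B2}); B1 = inr false,        *)
(* B2 = inr true.  Given for reference: the derivation below works on  *)
(* the unfolded list of spatial conjuncts, represented symbolically.   *)
Inductive mark := M1 | M2 | M12.

Fixpoint liftL (A F : Type) (g : form A F) : form (A + bool) F :=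
  match g with
  | FTrue => FTrue | FFalse => FFalse
  | Un a y => Un (inl a) y | Bin f y z => Bin f y z | Eq y z => Eq y z
  | Not g1 => Not (liftL g1) | And g1 g2 => And (liftL g1) (liftL g2)
  | Or g1 g2 => Or (liftL g1) (liftL g2) | Imp g1 g2 => Imp (liftL g1) (liftL g2)
  | Ex y g1 => Ex y (liftL g1) | All y g1 => All y (liftL g1)
  | ExGe k y g1 => ExGe k y (liftL g1) | ExEq k y g1 => ExEq k y (liftL g1)
  | Star g1 g2 => Star (liftL g1) (liftL g2)
  end.

Section Translation.
Variables (A F : finType) (n : nat) (xs : n.-tuple nat) (x : nat) (E : seq (nat * 'I_n)).
Notation L' := (form (A + bool) F).

Definition Mark (m : option mark) : L' :=
  match m with
  | None => And (Not (Un (inr false) x)) (Not (Un (inr true) x))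
  | Some M1 => And (Un (inr false) x) (Not (Un (inr true) x))
  | Some M2 => And (Not (Un (inr false) x)) (Un (inr true) x)
  | Some M12 => And (Un (inr false) x) (Un (inr true) x)
  end.
Definition E0 : L' := liftL (gform xs set0).
Definition emptyx : L' := liftL (xform xs x set0).
Definition delta : L' := bigAnd [seq Not (@Eq (A + bool) F x (tnth xs i)) | i <- enum 'I_n].
Definition GE : L' := And E0 (All x (Imp delta (And emptyx (Mark None)))).
Definition Kf (P : {set gatom A F n}) : L' :=
  And (liftL (gform xs P)) (All x (Imp delta (And emptyx (Mark None)))).
Definition AnyF (m : mark) (T : {set xatom A F n}) : L' :=
  And E0 (All x (Imp delta (Or (And (liftL (xform xs x T)) (Mark (Some m)))
                                (And emptyx (Mark None))))).
Definition OneF (m : mark) (T : {set xatom A F n}) : L' :=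
  And (AnyF m T) (ExEq 1 x (And delta (And (liftL (xform xs x T)) (Mark (Some m))))).

Definition Xf (m : mark) (T : {set xatom A F n}) (c : cnt) : L' :=
  match c with
  | CEq j => iter j (Star (OneF m T)) GE
  | CGe p => Star (iter p (Star (OneF m T)) GE) (AnyF m T)
  end.

Definition Sf (m : mark) (C : cstar A F n) : L' :=
  And (liftL (Eform A F xs E))
    (foldl (fun acc T => Star acc (Xf m T (cs_s C T))) (Kf (cs_F C))
           (enum [set: {set xatom A F n}])).

(* symbolic spatial conjuncts (other than the K-conjunct) *)
Inductive conj :=
| CGE
| COne (m : mark) (T : {set xatom A F n})
| CAny (m : mark) (T : {set xatom A F n}).

Definition conj_form (c : conj) : L' :=
  match c with CGE => GE | COne m T => OneF m T | CAny m T => AnyF m T end.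

Definition Xlist (m : mark) (T : {set xatom A F n}) (c : cnt) : seq conj :=
  match c with
  | CEq j => nseq j (COne m T) ++ [:: CGE]
  | CGe p => nseq p (COne m T) ++ [:: CGE; CAny m T]
  end.

Definition Slist (m : mark) (C : cstar A F n) : seq conj :=
  flatten [seq Xlist m T (cs_s C T) | T <- enum [set: {set xatom A F n}]].

(* AC of *, unit law G * G_E ~ G (the K-conjunct is always present),
   idempotence Any_m(T) * Any_m(T) ~ Any_m(T) *)
Inductive ident_step : seq conj -> seq conj -> Prop :=
| id_perm l l' : Permutation l l' -> ident_step l l'
| id_unit_rm l : ident_step (CGE :: l) l
| id_unit_add l : ident_step l (CGE :: l)
| id_idem_rm m T l : ident_step (CAny m T :: CAny m T :: l) (CAny m T :: l)
| id_idem_add m T l : ident_step (CAny m T :: l) (CAny m T :: CAny m T :: l).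

Definition ident : seq conj -> seq conj -> Prop := clos_refl_trans _ ident_step.

Inductive rule14 : seq conj -> seq conj -> Prop :=
| r1 T1 T2 T : oplus T1 T2 = Some T ->
    rule14 [:: COne M1 T1; COne M2 T2] [:: COne M12 T]
| r2 T1 T2 T : oplus T1 T2 = Some T ->
    rule14 [:: COne M1 T1; CAny M2 T2] [:: COne M12 T; CAny M2 T2]
| r3 T1 T2 T : oplus T1 T2 = Some T ->
    rule14 [:: CAny M1 T1; COne M2 T2] [:: CAny M1 T1; COne M12 T]
| r4 T1 T2 T : oplus T1 T2 = Some T ->
    rule14 [:: CAny M1 T1; CAny M2 T2] [:: CAny M1 T1; CAny M2 T2; CAny M12 T].

Inductive rule56 : seq conj -> seq conj -> Prop :=
| r5 T : rule56 [:: CAny M1 T] [:: CGE]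
| r6 T : rule56 [:: CAny M2 T] [:: CGE].

(* applying a rule instance to a spatial sub-conjunction
   (the sub-conjunction is brought to the front by AC, i.e. ident) *)
Definition rstep (R : seq conj -> seq conj -> Prop) (l l' : seq conj) : Prop :=
  exists l0 lhs rhs, R lhs rhs /\ l = lhs ++ l0 /\ l' = rhs ++ l0.

Definition phase (R : seq conj -> seq conj -> Prop) : seq conj -> seq conj -> Prop :=
  clos_refl_trans _ (fun l l' => ident_step l l' \/ rstep R l l').

Definition is12 (c : conj) : Prop :=
  match c with COne M12 _ | CAny M12 _ => True | _ => False end.

(* H (besides the K-conjunct) is a derivation result from W:
   rules (1)-(4) first, then (5)-(6), everything modulo identifications *)
Definition derives (W H : seq conj) : Prop :=
  exists W', phase rule14 W W' /\ phase rule56 W' H /\ List.Forall is12 H.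

(* ERes(C1,C2,C3): K(F1)*K(F2) is replaced by K(F1 (x) F2), which must be
   defined and equal to the K-conjunct K(F3) of S_{1,2}(C3); the other
   conjuncts of S_{1,2}(C3) coincide modulo identifications with a
   derivation result from those of S_{1}(C1) * S_{2}(C2). *)
Definition ERes (C1 C2 C3 : cstar A F n) : Prop :=
  oplus (cs_F C1) (cs_F C2) = Some (cs_F C3) /\
  exists H, derives (Slist M1 C1 ++ Slist M2 C2) H /\ ident H (Slist M12 C3).
End Translation.

From HB Require Import structures.
From Stdlib Require Import Relations Permutation.
From mathcomp Require Import all_boot.

Set Implicit Arguments. Unset Strict Implicit. Unset Printing Implicit Defensive.

(* Let rho satisfy C3 and give every element d off the xs its type tau d in
   ext.  The spatial conjuncts of S_{1,2}(C3) are then realized by letting each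
   One/Any-conjunct of type T mark elements of type T, the way B1 and B2 mark
   them semantically: every element is marked by exactly one {1,2}-conjunct.
   Read backwards, every rule and identification turns a realization of its
   right-hand side into one of its left-hand side; rules (1)-(4) split an
   element marked by a {1,2}-conjunct of type T1 (+) T2 into one marked by a
   {1}-conjunct of type T1 and a {2}-conjunct of type T2.  So S_{1}(C1) *
   S_{2}(C2) is realized, which yields types tau1 d (+) tau2 d = tau d
   occurring with the multiplicities demanded by C1 and C2.  Cutting every atom
   of the environment along F1 (x) F2 = F3 and tau1 (+) tau2 = tau gives the
   two halves satisfying C1 and C2. *)

Definition mark_eqb (m m' : mark) : bool :=
  match m, m' with M1, M1 | M2, M2 | M12, M12 => true | _, _ => false end.

Lemma mark_eqP : Equality.axiom mark_eqb.
Proof. by do 2 case; constructor. Qed.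

HB.instance Definition _ := hasDecEq.Build mark mark_eqP.

Lemma seq_map_List_map (S T : Type) (f : S -> T) (s : seq S) : map f s = List.map f s.
Proof. by elim: s => //= a s ->. Qed.

Lemma Permutation_all (T : Type) (a : pred T) (s t : seq T) :
  Permutation s t -> all a s = all a t.
Proof. by elim=> //= [y s' t' _ -> | y z s' | s' t' r' _ -> _ ->]; rewrite // andbCA. Qed.

Lemma Permutation_pmap (S : Type) (T : eqType) (f : S -> option T) (s t : seq S) :
  Permutation s t -> perm_eq (pmap f s) (pmap f t).
Proof.
elim=> //= [y s' t' _ IH | y z s' | s' t' r' _ IH1 _ IH2].
- by case: (f y) => //= v; rewrite perm_cons.
- by case: (f y) => [v|]; case: (f z) => [w|] //=; rewrite (perm_catCA [:: w] [:: v]).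
- exact: perm_trans IH1 IH2.
Qed.

Lemma all_flatten (T : Type) (a : pred T) (ss : seq (seq T)) :
  all a (flatten ss) = all (all a) ss.
Proof. by elim: ss => //= s ss <-; rewrite all_cat. Qed.

Lemma oplus_subl (T : finType) (T1 T2 T12 : {set T}) :
  oplus T1 T2 = Some T12 -> T1 \subset T12.
Proof. by rewrite /oplus; case: ifP => // _ [<-]; apply: subsetUl. Qed.

Lemma oplus_subr (T : finType) (T1 T2 T12 : {set T}) :
  oplus T1 T2 = Some T12 -> T2 \subset T12.
Proof. by rewrite /oplus; case: ifP => // _ [<-]; apply: subsetUr. Qed.

Lemma oplus_memr (T : finType) (T1 T2 T12 : {set T}) a :
  oplus T1 T2 = Some T12 -> a \in T12 -> (a \in T2) = (a \notin T1).
Proof.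
rewrite /oplus; case: ifP => // dis [<-]; rewrite in_setU.
by case: (boolP (a \in T1)) => [/(disjointFr dis) -> | _ /= ->].
Qed.

Definition fiber (D Y : finType) (S : pred D) (t : D -> Y) (y : Y) : {set D} :=
  [set d | S d && (t d == y)].

Definition cnt_holds (c : cnt) (N : nat) : bool :=
  match c with CEq j => N == j | CGe p => p <= N end.

Section Realization.
Variables (A F : finType) (n : nat) (D : finType) (outside : pred D)
  (tau : D -> {set xatom A F n}).
Local Notation X := {set xatom A F n}.
Local Notation conjunct := (conj A F n).
Local Notation assignment := (seq (conjunct * {set D})%type).
Local Notation cGE := (@CGE A F n).

Definition label (c : conjunct) : option (mark * X) :=
  match c with CGE => None | COne m T | CAny m T => Some (m, T) end.

Definition is_one (c : conjunct) : bool := if c is COne _ _ then true else false.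

(* An assignment pairs each spatial conjunct with the elements off the xs it marks. *)
Definition owners (P : assignment) (d : D) : seq (mark * X) :=
  pmap (fun p : conjunct * {set D} => if d \in p.2 then label p.1 else None) P.

Definition admissible (d : D) (o : seq (mark * X)) : Prop :=
  if outside d then
    perm_eq o [:: (M12, tau d)] \/
    exists T1 T2, oplus T1 T2 = Some (tau d) /\ perm_eq o [:: (M1, T1); (M2, T2)]
  else o = [::].

Definition ones_singleton (P : assignment) : bool :=
  all (fun p : conjunct * {set D} => is_one p.1 ==> (#|p.2| == 1)) P.

Definition realizable (l : seq conjunct) : Prop :=
  exists2 P, map fst P = l & ones_singleton P /\ forall d, admissible d (owners P d).

Lemma ones_singleton_cat P Q :
  ones_singleton (P ++ Q) = ones_singleton P && ones_singleton Q.
Proof. exact: all_cat. Qed.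

Lemma owners_cat P Q d : owners (P ++ Q) d = owners P d ++ owners Q d.
Proof. exact: pmap_cat. Qed.

Lemma admissible_perm d o o' : perm_eq o o' -> admissible d o -> admissible d o'.
Proof.
rewrite /admissible => oo'; case: (outside d) => [[h|[T1 [T2 [hT h]]]]|h].
- by left; rewrite -(permPl oo').
- by right; exists T1, T2; rewrite -(permPl oo').
- by apply/perm_nilP; rewrite perm_sym -h.
Qed.

Lemma admissible_uniq d o : admissible d o -> uniq o.
Proof.
by rewrite /admissible; case: (outside d) => [[h|[T1 [T2 [_ h]]]]|->]; rewrite ?(perm_uniq h).
Qed.

Lemma admissible_M12 d op o T : (M12, T) \in op -> admissible d (op ++ o) ->
  [/\ outside d, tau d = T & o = [::]].
Proof.
move=> hT; rewrite /admissible.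
have hT' : (M12, T) \in op ++ o by rewrite mem_cat hT.
case: (outside d) => [[h|[T1 [T2 [_ h]]]]|h]; last by rewrite h in hT'.
- have := perm_mem h (M12, T); rewrite hT' inE => /esym/eqP[->].
  have := perm_size h; have : 0 < size op by case: op hT {h hT'}.
  rewrite size_cat; case: (size op) => // k _; rewrite addSn => -[] /eqP.
  by rewrite addn_eq0 => /andP[_ /nilP].
- by move: (perm_mem h (M12, T)); rewrite hT' !inE.
Qed.

Lemma admissible_refine d op o T1 T2 T : oplus T1 T2 = Some T -> (M12, T) \in op ->
  admissible d (op ++ o) -> admissible d ([:: (M1, T1); (M2, T2)] ++ o).
Proof.
move=> hT hop /(admissible_M12 hop) [dout eT ->]; rewrite /admissible dout eT.
by right; exists T1, T2.
Qed.

Definition replaces (Pl Pr : assignment) : Prop :=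
  ones_singleton Pl /\
  forall d o, admissible d (owners Pr d ++ o) -> admissible d (owners Pl d ++ o).

Lemma realizable_replace lhs rhs l0 :
  (forall Pr, map fst Pr = rhs -> ones_singleton Pr ->
     exists2 Pl, map fst Pl = lhs & replaces Pl Pr) ->
  realizable (rhs ++ l0) -> realizable (lhs ++ l0).
Proof.
move=> hrepl [P eP [oneP adP]].
set Pr := take (size rhs) P; set P0 := drop (size rhs) P.
have eP' : P = Pr ++ P0 by rewrite cat_take_drop.
have eR : map fst Pr = rhs by rewrite map_take eP take_size_cat.
have e0 : map fst P0 = l0 by rewrite map_drop eP drop_size_cat.
rewrite eP' in oneP adP.
move: oneP; rewrite ones_singleton_cat => /andP[oneR one0].
have [Pl eL [oneL hL]] := hrepl Pr eR oneR.
exists (Pl ++ P0); first by rewrite map_cat eL e0.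
split=> [|d]; first by rewrite ones_singleton_cat oneL.
by rewrite owners_cat; apply: hL; rewrite -owners_cat.
Qed.

Lemma replaces_same_owners Pl Pr : ones_singleton Pl ->
  (forall d, uniq (owners Pr d) -> owners Pl d = owners Pr d) -> replaces Pl Pr.
Proof.
move=> oneL h; split=> // d o ad; rewrite h //.
by have := admissible_uniq ad; rewrite cat_uniq => /andP[].
Qed.

Lemma replaces_refine Pl Pr (S : {set D}) T1 T2 T :
  oplus T1 T2 = Some T -> ones_singleton Pl ->
  (forall d, d \notin S -> owners Pl d = owners Pr d) ->
  (forall d, d \in S -> (M12, T) \in owners Pr d /\ owners Pl d = [:: (M1, T1); (M2, T2)]) ->
  replaces Pl Pr.
Proof.
move=> hT oneL hout hin; split=> // d o; case: (boolP (d \in S)) => dS.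
  by case: (hin d dS) => hop ->; apply: admissible_refine hT hop.
by rewrite hout.
Qed.

Lemma realizable_rule14 l l' : rstep (@rule14 A F n) l l' -> realizable l' -> realizable l.
Proof.
case=> l0 [lhs [rhs [hR [-> ->]]]]; apply: realizable_replace => Pr.
case: hR => T1 T2 T hT.
- case: Pr => [|[c S] []] //= [->]; rewrite /ones_singleton /= !andbT => oneS.
  exists [:: (COne M1 T1, S); (COne M2 T2, S)] => //.
  apply: (replaces_refine (S := S) hT); first by rewrite /ones_singleton /= oneS.
    by move=> d /negbTE dS; rewrite /owners /= dS.
  by move=> d dS; rewrite /owners /= dS /= mem_head.
- case: Pr => [|[c S] [|[c2 S2] []]] //= [-> ->]; rewrite /ones_singleton /= !andbT => oneS.
  exists [:: (COne M1 T1, S); (CAny M2 T2, S2 :|: S)] => //.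
  apply: (replaces_refine (S := S) hT); first by rewrite /ones_singleton /= oneS.
    by move=> d /negbTE dS; rewrite /owners /= in_setU dS orbF.
  by move=> d dS; rewrite /owners /= in_setU dS orbT /= mem_head.
- case: Pr => [|[c S1] [|[c2 S] []]] //= [-> ->]; rewrite /ones_singleton /= !andbT => oneS.
  exists [:: (CAny M1 T1, S1 :|: S); (COne M2 T2, S)] => //.
  apply: (replaces_refine (S := S) hT); first by rewrite /ones_singleton /= oneS.
    by move=> d /negbTE dS; rewrite /owners /= in_setU dS orbF.
  move=> d dS; rewrite /owners /= in_setU dS orbT.
  by case: (d \in S1); rewrite /= ?mem_head ?inE ?eqxx ?orbT.
- case: Pr => [|[c S1] [|[c2 S2] [|[c3 S] []]]] //= [-> -> ->] _.
  exists [:: (CAny M1 T1, S1 :|: S); (CAny M2 T2, S2 :|: S)] => //.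
  apply: (replaces_refine (S := S) hT) => // d.
    by move=> /negbTE dS; rewrite /owners /= !in_setU dS !orbF.
  move=> dS; rewrite /owners /= !in_setU dS !orbT.
  by case: (d \in S1); case: (d \in S2); rewrite /= ?mem_head ?inE ?eqxx ?orbT.
Qed.

Lemma realizable_rule56 l l' : rstep (@rule56 A F n) l l' -> realizable l' -> realizable l.
Proof.
case=> l0 [lhs [rhs [hR [-> ->]]]]; apply: realizable_replace => Pr.
case: hR => T; case: Pr => [|[c S] []] //= [->] _;
  [exists [:: (CAny M1 T, set0)] | exists [:: (CAny M2 T, set0)]] => //;
  by apply: replaces_same_owners => // d _; rewrite /owners /= in_set0 if_same.
Qed.

Lemma realizable_ident_step l l' : ident_step l l' -> realizable l' -> realizable l.
Proof.
case=> {l l'} [l l' pll' | l | l | m T l | m T l].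
- case=> P eP [oneP adP].
  have [P' [-> pP]] : exists P', l = List.map fst P' /\ Permutation P P'.
    by apply: Permutation_map_inv; rewrite -seq_map_List_map eP.
  exists P'; first exact: seq_map_List_map.
  split=> [|d]; first by rewrite /ones_singleton -(Permutation_all _ pP).
  exact: admissible_perm (Permutation_pmap _ pP) (adP d).
- apply: (@realizable_replace [:: cGE] [::] l) => -[] // _ _.
  exists [:: (cGE, set0)] => //.
  by apply: replaces_same_owners => // d _; rewrite /owners /= in_set0.
- apply: (@realizable_replace [::] [:: cGE] l) => -[|[c S] []] //= [->] _.
  by exists [::] => //; apply: replaces_same_owners => // d _; rewrite /owners /= if_same.
- apply: (@realizable_replace [:: CAny m T; CAny m T] [:: CAny m T] l).
  move=> -[|[c S] []] //= [->] _; exists [:: (CAny m T, S); (CAny m T, set0)] => //.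
  by apply: replaces_same_owners => // d _; rewrite /owners /= in_set0.
- apply: (@realizable_replace [:: CAny m T] [:: CAny m T; CAny m T] l).
  move=> -[|[c S1] [|[c2 S2] []]] //= [-> ->] _; exists [:: (CAny m T, S1 :|: S2)] => //.
  apply: replaces_same_owners => // d; rewrite /owners /= in_setU.
  by case: (d \in S1); case: (d \in S2); rewrite //= inE eqxx.
Qed.

Lemma realizable_rt (step : seq conjunct -> seq conjunct -> Prop) :
  (forall l l', step l l' -> realizable l' -> realizable l) ->
  forall l l', clos_refl_trans _ step l l' -> realizable l' -> realizable l.
Proof. by move=> hstep l l'; elim=> [a b /hstep | // | a b c _ IH1 _ IH2 /IH2 /IH1]. Qed.

Lemma realizable_phase (R : seq conjunct -> seq conjunct -> Prop) :
  (forall l l', rstep R l l' -> realizable l' -> realizable l) ->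
  forall l l', phase R l l' -> realizable l' -> realizable l.
Proof. by move=> hR; apply: realizable_rt => l l' [/realizable_ident_step | /hR]. Qed.

Lemma realizable_derives W H : derives W H -> realizable H -> realizable W.
Proof.
case=> W' [p14 [p56 _]].
by move/(realizable_phase realizable_rule56 p56)/(realizable_phase realizable_rule14 p14).
Qed.

Lemma realizable_ident l l' : ident l l' -> realizable l' -> realizable l.
Proof. exact: realizable_rt realizable_ident_step l l'. Qed.

Definition ones (m : mark) (T : X) (s : seq D) : assignment :=
  [seq (COne m T, [set e]) | e <- s].

Lemma map_fst_ones m T s : map fst (ones m T s) = nseq (size s) (COne m T).
Proof. by elim: s => //= e s ->. Qed.

Lemma ones_singleton_ones m T s : ones_singleton (ones m T s).
Proof. by rewrite /ones_singleton all_map; apply/allP => e _ /=; rewrite cards1. Qed.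

Lemma owners_ones m T s d :
  uniq s -> owners (ones m T s) d = if d \in s then [:: (m, T)] else [::].
Proof.
elim: s => // e s IH /andP[es us].
rewrite (_ : ones m T (e :: s) = [:: (COne m T, [set e])] ++ ones m T s) // owners_cat IH //.
by rewrite /owners /= in_set1 inE; case: eqP => [-> |] /=; rewrite ?(negbTE es).
Qed.

Definition block (c : cnt) (T : X) : assignment :=
  let s := enum (fiber outside tau T) in
  match c with
  | CEq _ => ones M12 T s ++ [:: (cGE, set0)]
  | CGe p => ones M12 T (take p s) ++
             [:: (cGE, set0); (CAny M12 T, fiber outside tau T :\: [set e in take p s])]
  end.

Lemma owners_block c T d :
  owners (block c T) d = if d \in fiber outside tau T then [:: (M12, T)] else [::].
Proof.
have us := enum_uniq (fiber outside tau T).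
case: c => [j|p]; rewrite /block owners_cat owners_ones ?take_uniq //.
  by rewrite mem_enum /owners /= if_same cats0.
rewrite /owners /= if_same !inE.
case: (boolP (d \in take p (enum (fiber outside tau T)))) => dp /=; last by case: (_ && _).
by move: (mem_take dp); rewrite mem_enum inE => ->.
Qed.

Lemma map_fst_block c T :
  cnt_holds c #|fiber outside tau T| -> map fst (block c T) = Xlist M12 T c.
Proof.
rewrite cardE; case: c => [j /eqP <- | p hp]; rewrite /block map_cat map_fst_ones //.
by rewrite size_takel.
Qed.

Lemma ones_singleton_block c T : ones_singleton (block c T).
Proof. by case: c => j; rewrite /block ones_singleton_cat ones_singleton_ones. Qed.

Definition realization (C : cstar A F n) : assignment :=
  flatten [seq block (cs_s C T) T | T <- enum [set: X]].

Lemma owners_realization C d :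
  owners (realization C) d = if outside d then [:: (M12, tau d)] else [::].
Proof.
have -> : owners (realization C) d =
    [seq (M12, T) | T <- enum [set: X] & d \in fiber outside tau T].
  rewrite /realization; elim: (enum _) => //= T s IH.
  by rewrite owners_cat IH owners_block; case: (_ \in _).
case: (boolP (outside d)) => dout.
  rewrite (@eq_filter _ _ (pred1 (tau d))) ?filter_pred1_uniq ?enum_uniq ?mem_enum ?in_setT //.
  by move=> T; rewrite inE dout eq_sym.
by rewrite (@eq_filter _ _ pred0) ?filter_pred0 // => T; rewrite inE (negbTE dout).
Qed.

Lemma realizable_Slist_M12 C :
  (forall T, cnt_holds (cs_s C T) #|fiber outside tau T|) -> realizable (Slist M12 C).
Proof.
move=> hC; exists (realization C).
  rewrite /realization /Slist map_flatten -map_comp; congr flatten.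
  by apply: eq_map => T /=; rewrite map_fst_block.
split=> [|d].
  by rewrite /ones_singleton all_flatten all_map; apply/allP => T _; apply: ones_singleton_block.
by rewrite owners_realization /admissible; case: (outside d) => //; left.
Qed.

Definition owner_type (P : assignment) (m : mark) (d : D) : X :=
  head set0 [seq l.2 | l <- owners P d & l.1 == m].

Definition mark_free (m : mark) (l : seq conjunct) : bool :=
  all (fun c => if label c is Some lab then lab.1 != m else true) l.

Lemma mark_free_Slist m m' C : m' != m -> mark_free m' (Slist m C).
Proof.
move=> mm'; rewrite /mark_free /Slist all_flatten all_map; apply/allP => T _ /=.
by case: (cs_s C T) => j; rewrite all_cat all_nseq /= (eq_sym m) mm' orbT.
Qed.

Lemma mark_free_owners m P d l : mark_free m (map fst P) -> l \in owners P d -> l.1 != m.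
Proof.
elim: P => // p P IH /andP[hp hP]; rewrite -cat1s owners_cat mem_cat => /orP[|/(IH hP)//].
by rewrite /owners /=; case: (d \in p.2); case: (label p.1) hp => //= y hy; rewrite inE => /eqP ->.
Qed.

Lemma owners_split P d : mark_free M12 (map fst P) -> admissible d (owners P d) -> outside d ->
  oplus (owner_type P M1 d) (owner_type P M2 d) = Some (tau d) /\
  perm_eq (owners P d) [:: (M1, owner_type P M1 d); (M2, owner_type P M2 d)].
Proof.
move=> free ad dout; move: ad; rewrite /admissible dout => -[h|[T1 [T2 [hT h]]]].
  have := @mark_free_owners M12 P d (M12, tau d) free.
  by rewrite (perm_mem h) mem_head eqxx => /(_ isT).
have eM m : owner_type P m d = head set0 [seq l.2 | l <- [:: (M1, T1); (M2, T2)] & l.1 == m].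
  rewrite /owner_type (@perm_small_eq _ [seq l.2 | l <- owners P d & l.1 == m]
                                       [seq l.2 | l <- [:: (M1, T1); (M2, T2)] & l.1 == m]) //.
    by case: m.
  by apply: perm_map; apply: perm_filter.
by rewrite !eM.
Qed.

Lemma count_owners_split P d m T : mark_free M12 (map fst P) -> admissible d (owners P d) ->
  m != M12 -> count_mem (m, T) (owners P d) = outside d && (owner_type P m d == T).
Proof.
move=> free ad mM; case: (boolP (outside d)) => dout; last first.
  by move: ad; rewrite /admissible (negbTE dout) => ->.
have [_ /permP ->] := owners_split free ad dout.
by case: m mM => //= _; rewrite xpair_eqE /= ?addn0.
Qed.

Lemma sum_count_owners P l :
  \sum_d count_mem l (owners P d) = \sum_(p <- P | label p.1 == Some l) #|p.2|.
Proof.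
elim: P => [|p P IH]; first by rewrite big_nil big1.
have -> : \sum_d count_mem l (owners (p :: P) d) =
    \sum_d ((d \in p.2) && (label p.1 == Some l)) + \sum_d count_mem l (owners P d).
  rewrite -big_split; apply: eq_bigr => d _; rewrite -cat1s owners_cat count_cat /owners /=.
  by case: (d \in p.2); case: (label p.1) => //= y; rewrite addn0 (inj_eq Some_inj).
rewrite IH big_cons; case: (label p.1 == Some l); last by rewrite big1 // => d; rewrite andbF.
congr addn; rewrite -sum1_card [RHS]big_mkcond.
by apply: eq_bigr => d _; rewrite andbT; case: (d \in p.2).
Qed.

Lemma sum_label_split P l : ones_singleton P ->
  \sum_(p <- P | label p.1 == Some l) #|p.2| =
  count (fun c => (label c == Some l) && is_one c) (map fst P) +
  \sum_(p <- P | (label p.1 == Some l) && ~~ is_one p.1) #|p.2|.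
Proof.
elim: P => [|[c S] P IH]; first by rewrite !big_nil.
rewrite /= => /andP[hS /IH {}IH]; rewrite !big_cons IH /=.
case: (label c == Some l) => //=.
by case: (is_one c) hS => /= [/eqP -> | _]; rewrite ?add0n !addnA // (addnC #|S|).
Qed.

Lemma count_Xlist_off m T c (a : pred conjunct) :
  ~~ a cGE -> ~~ a (COne m T) -> ~~ a (CAny m T) -> count a (Xlist m T c) = 0.
Proof.
move=> /negbTE h0 /negbTE h1 /negbTE h2.
by case: c => j; rewrite /= count_cat count_nseq /= h0 h1 ?h2.
Qed.

Lemma count_Slist m C m' T (a : pred conjunct) : (forall c, a c -> label c = Some (m', T)) ->
  count a (Slist m C) = if m' == m then count a (Xlist m T (cs_s C T)) else 0.
Proof.
move=> ha; have off T' : (m, T') != (m', T) -> count a (Xlist m T' (cs_s C T')) = 0.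
  move=> ne; apply: count_Xlist_off; apply/negP => /ha //= [e1 e2];
    by rewrite e1 e2 eqxx in ne.
rewrite /Slist count_flatten -map_comp sumnE big_map; case: eqP => [em | /eqP ne].
  rewrite em in off; rewrite (bigD1_seq T) ?mem_enum ?in_setT ?enum_uniq //=.
  rewrite big1 ?addn0 // => T' neT.
  by apply: off; rewrite xpair_eqE eqxx.
by rewrite big1 // => T' _; apply: off; rewrite xpair_eqE negb_and eq_sym ne.
Qed.

Lemma cnt_holds_sum_label P m C T : ones_singleton P ->
  (forall q : pred conjunct,
     count (fun c => (label c == Some (m, T)) && q c) (map fst P) =
     count (fun c => (label c == Some (m, T)) && q c) (Xlist m T (cs_s C T))) ->
  cnt_holds (cs_s C T) (\sum_(p <- P | label p.1 == Some (m, T)) #|p.2|).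
Proof.
move=> oneP hc; rewrite sum_label_split // hc.
case e: (cs_s C T) => [j|p];
  rewrite /= count_cat count_nseq /= eqxx ?mul1n ?addn0 /=; last exact: leq_addr.
rewrite big_hasC ?addn0 // has_count.
have -> : count (fun p : conjunct * {set D} => (label p.1 == Some (m, T)) && ~~ is_one p.1) P =
          count (fun c => (label c == Some (m, T)) && ~~ is_one c) (map fst P) by rewrite count_map.
by rewrite hc e /= count_cat count_nseq /= eqxx.
Qed.

Lemma card_fiber_owner_type P m T :
  mark_free M12 (map fst P) -> (forall d, admissible d (owners P d)) -> m != M12 ->
  #|fiber outside (owner_type P m) T| = \sum_(p <- P | label p.1 == Some (m, T)) #|p.2|.
Proof.
move=> free adP mM; rewrite -sum_count_owners -sum1_card big_mkcond /=.
by apply: eq_bigr => d _; rewrite (count_owners_split _ free (adP d) mM) inE; case: (_ && _).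
Qed.

Lemma realizable_split C1 C2 : realizable (Slist M1 C1 ++ Slist M2 C2) ->
  exists tau1 tau2 : D -> X,
    [/\ forall d, outside d -> oplus (tau1 d) (tau2 d) = Some (tau d),
        forall T, cnt_holds (cs_s C1 T) #|fiber outside tau1 T| &
        forall T, cnt_holds (cs_s C2 T) #|fiber outside tau2 T|].
Proof.
case=> P eP [oneP adP].
have free : mark_free M12 (map fst P).
  by rewrite eP /mark_free all_cat; apply/andP; split; apply: mark_free_Slist.
have hlabel m T (q : pred conjunct) c : (label c == Some (m, T)) && q c -> label c = Some (m, T).
  by case/andP=> /eqP.
exists (owner_type P M1), (owner_type P M2); split.
- by move=> d dout; case: (owners_split free (adP d) dout).
- move=> T; rewrite card_fiber_owner_type //; apply: cnt_holds_sum_label => // q.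
  by rewrite eP count_cat !(count_Slist _ _ (hlabel M1 T q)) /= addn0.
- move=> T; rewrite card_fiber_owner_type //; apply: cnt_holds_sum_label => // q.
  by rewrite eP count_cat !(count_Slist _ _ (hlabel M2 T q)).
Qed.

Theorem ERes_split_types C1 C2 C3 : ERes C1 C2 C3 ->
  (forall T, cnt_holds (cs_s C3 T) #|fiber outside tau T|) ->
  exists tau1 tau2 : D -> X,
    [/\ forall d, outside d -> oplus (tau1 d) (tau2 d) = Some (tau d),
        forall T, cnt_holds (cs_s C1 T) #|fiber outside tau1 T| &
        forall T, cnt_holds (cs_s C2 T) #|fiber outside tau2 T|].
Proof.
case=> _ [H [derH identH]] hC3; apply: realizable_split.
exact: realizable_derives derH (realizable_ident identH (realizable_Slist_M12 hC3)).
Qed.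

End Realization.

Lemma all_covering (T : finType) (a : pred T) (s : seq T) :
  (forall t, t \in s) -> all a s = [forall t, a t].
Proof. by move=> sT; apply/allP/forallP => h t //; apply: h. Qed.

Lemma sat_bigAnd (A F D : finType) u b (r : nat -> D) (l : seq (form A F)) :
  sat u b r (bigAnd l) = all (sat u b r) l.
Proof. by elim: l => //= g l ->. Qed.

Lemma sat_lit (A F D : finType) u b (r : nat -> D) bb (g : form A F) :
  sat u b r (lit bb g) = (sat u b r g == bb).
Proof. by case: bb => /=; case: (sat _ _ _ _). Qed.

Lemma upd_eq (D : Type) (r : nat -> D) y d : upd r y d y = d.
Proof. by rewrite /upd eqxx. Qed.

Section Semantics.
Variables (A F : finType) (n : nat) (xs : n.-tuple nat) (x : nat) (D : finType).
Hypothesis x_fresh : x \notin xs.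
Local Notation X := {set xatom A F n}.

Lemma upd_tnth (r : nat -> D) d i : upd r x d (tnth xs i) = r (tnth xs i).
Proof. by rewrite /upd; case: eqP => // e; move: x_fresh; rewrite -e mem_tnth. Qed.

Definition off_xs (r : nat -> D) (d : D) : bool := [forall i, d != r (tnth xs i)].

Definition inj_xs (r : nat -> D) : bool :=
  [forall i, forall j, (r (tnth xs i) == r (tnth xs j)) == (i == j)].

Definition gtype u b (r : nat -> D) : {set gatom A F n} :=
  [set a | sat u b r (gatom_form xs a)].

Definition xtype u b (r : nat -> D) (d : D) : X :=
  [set a | sat u b (upd r x d) (xatom_form xs x a)].

Lemma sat_gform u b (r : nat -> D) P :
  sat u b r (gform xs P) = (gtype u b r == P) && inj_xs r.
Proof.
rewrite /gform sat_bigAnd all_cat all_map.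
rewrite all_covering => [|a]; last by rewrite mem_enum in_setT.
congr andb.
  apply/forallP/eqP => [h | <- a]; last by rewrite /= sat_lit /gtype inE.
  by apply/setP => a; rewrite /gtype inE; apply/eqP; rewrite -sat_lit; exact: h.
apply/all_allpairsP/forallP => [h i | h i j _ _].
  by apply/forallP => j; have := h i j (mem_enum _ _) (mem_enum _ _); rewrite /= sat_lit.
by have := forallP (h i) j; rewrite /= sat_lit.
Qed.

Lemma sat_xform u b (r : nat -> D) d T :
  sat u b (upd r x d) (xform xs x T) = off_xs r d && (xtype u b r d == T).
Proof.
rewrite /xform sat_bigAnd !all_cat /= !all_map upd_eq eqxx /=.
rewrite !all_covering => [|i|i|a]; rewrite ?mem_enum ?in_setT //.
have hoff : [forall i, sat u b (upd r x d) (Not (Eq (tnth xs i) x))] = off_xs r d.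
  by apply: eq_forallb => i /=; rewrite upd_eq upd_tnth eq_sym.
have hoff' : [forall i, sat u b (upd r x d) (Not (Eq x (tnth xs i)))] = off_xs r d.
  by apply: eq_forallb => i /=; rewrite upd_eq upd_tnth.
rewrite hoff hoff' andbb andbC; congr andb.
apply/forallP/eqP => [h | <- a]; last by rewrite /= sat_lit /xtype inE.
by apply/setP => a; rewrite /xtype inE; apply/eqP; rewrite -sat_lit; exact: h.
Qed.

Lemma sat_Eform E u b u' b' (r : nat -> D) :
  sat u b r (Eform A F xs E) = sat u' b' r (Eform A F xs E).
Proof. by rewrite /Eform; elim: E => //= e l ->. Qed.

Lemma sat_cs_form E u b (r : nat -> D) (C : cstar A F n) :
  sat u b r (cs_form xs x E C) =
  [&& sat u b r (Eform A F xs E), gtype u b r == cs_F C, inj_xs r &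
      [forall T, cnt_holds (cs_s C T) #|fiber (off_xs r) (xtype u b r) T|]].
Proof.
rewrite /cs_form /= sat_gform sat_bigAnd all_map.
rewrite all_covering => [|T]; last by rewrite mem_enum in_setT.
rewrite -andbA; congr [&& _, _, _ & _]; apply: eq_forallb => T /=.
have ecard : #|[set d | sat u b (upd r x d) (xform xs x T)]| =
             #|fiber (off_xs r) (xtype u b r) T|.
  by apply: eq_card => d; rewrite !inE sat_xform.
by case: (cs_s C T) => j /=; rewrite ecard.
Qed.

End Semantics.

Lemma split_set_by (T : finType) (S : {set T}) (k1 k2 : pred T) :
  (forall d, d \in S -> k2 d = ~~ k1 d) ->
  (S == [set d in S | k1 d] :|: [set d in S | k2 d]) &&
  [disjoint [set d in S | k1 d] & [set d in S | k2 d]].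
Proof.
move=> hk; apply/andP; split.
  by apply/eqP/setP => d; rewrite in_setU !inE; case dS: (d \in S); rewrite //= hk // orbN.
rewrite disjoint_subset; apply/subsetP => d; rewrite !inE => /andP[dS h1].
by rewrite hk // h1 andbF.
Qed.

Section Splitting.
Variables (A F : finType) (n : nat) (xs : n.-tuple nat) (x : nat) (D : finType).
Hypothesis x_fresh : x \notin xs.
Variables (u : {ffun A -> {set D}}) (b : {ffun F -> {set D * D}}) (r : nat -> D).
Hypothesis r_inj : inj_xs xs r.
Local Notation X := {set xatom A F n}.
Local Notation G := {set gatom A F n}.

Definition xs_index (d : D) : option 'I_n := [pick i | d == r (tnth xs i)].

Lemma xs_index_tnth i : xs_index (r (tnth xs i)) = Some i.
Proof.
rewrite /xs_index; case: pickP => [j /eqP e | /(_ i)]; last by rewrite eqxx.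
by move: (forallP (forallP r_inj i) j); rewrite e eqxx eq_sym => /eqP/eqP ->.
Qed.

Lemma xs_index_None d : (xs_index d == None) = off_xs xs r d.
Proof.
rewrite /xs_index; case: pickP => [i /eqP -> | none] /=.
  by apply/esym/negbTE/negP => /forallP/(_ i); rewrite eqxx.
by apply/esym/forallP => i; rewrite none.
Qed.

Lemma xs_index_Some d i : xs_index d = Some i -> d = r (tnth xs i).
Proof. by rewrite /xs_index; case: pickP => [j /eqP e [<-] | ]. Qed.

Definition keep_un (Gs : G) (t : D -> X) (p : A) (d : D) : bool :=
  match xs_index d with
  | Some i => (inl (p, i) : gatom A F n) \in Gs
  | None => (inl (inl (inl p)) : xatom A F n) \in t d
  end.

(* A pair of distinct elements off the xs satisfies no atom of a counting-star
   formula, so it may go to either half; [dflt] decides. *)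
Definition keep_bin (Gs : G) (t : D -> X) (dflt : bool) (f : F) (e : D * D) : bool :=
  match xs_index e.1, xs_index e.2 with
  | Some i, Some j => (inr (f, (i, j)) : gatom A F n) \in Gs
  | None, Some j => (inl (inr (f, j)) : xatom A F n) \in t e.1
  | Some i, None => (inr (f, i) : xatom A F n) \in t e.2
  | None, None => if e.1 == e.2 then (inl (inl (inr f)) : xatom A F n) \in t e.1 else dflt
  end.

Definition restr_un (Gs : G) (t : D -> X) : {ffun A -> {set D}} :=
  [ffun p => [set d in u p | keep_un Gs t p d]].

Definition restr_bin (Gs : G) (t : D -> X) (dflt : bool) : {ffun F -> {set D * D}} :=
  [ffun f => [set e in b f | keep_bin Gs t dflt f e]].

Lemma sat_gatom_restr Gs t dflt a :
  sat (restr_un Gs t) (restr_bin Gs t dflt) r (gatom_form xs a) =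
  sat u b r (gatom_form xs a) && (a \in Gs).
Proof.
by case: a => [[p i] | [f [i j]]]; rewrite /= ffunE inE /keep_un /keep_bin /= ?xs_index_tnth.
Qed.

Lemma sat_xatom_restr Gs t dflt d a : off_xs xs r d ->
  sat (restr_un Gs t) (restr_bin Gs t dflt) (upd r x d) (xatom_form xs x a) =
  sat u b (upd r x d) (xatom_form xs x a) && (a \in t d).
Proof.
rewrite -xs_index_None => /eqP dN.
by case: a => [[[p|f]|[f i]]|[f i]]; rewrite /= ffunE inE ?upd_eq ?upd_tnth //
  /keep_un /keep_bin /= ?dN ?xs_index_tnth ?eqxx.
Qed.

Lemma sat_cs_form_restr E (C : cstar A F n) (t : D -> X) dflt :
  sat u b r (Eform A F xs E) -> cs_F C \subset gtype xs u b r ->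
  (forall d, off_xs xs r d -> t d \subset xtype xs x u b r d) ->
  (forall T, cnt_holds (cs_s C T) #|fiber (off_xs xs r) t T|) ->
  sat (restr_un (cs_F C) t) (restr_bin (cs_F C) t dflt) r (cs_form xs x E C).
Proof.
move=> hE sG st hC; rewrite sat_cs_form // (sat_Eform _ _ _ _ u b) hE r_inj /=.
apply/andP; split.
  apply/eqP/setP => a; rewrite inE sat_gatom_restr.
  by case: (boolP (a \in cs_F C)) => [/(subsetP sG) | _]; rewrite ?inE ?andbF ?andbT.
apply/forallP => T; rewrite (eq_card (B := fiber (off_xs xs r) t T)) //.
move=> d; rewrite !inE; case: (boolP (off_xs xs r d)) => //= dout.
suff -> : xtype xs x (restr_un (cs_F C) t) (restr_bin (cs_F C) t dflt) r d = t d by [].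
apply/setP => a; rewrite inE sat_xatom_restr //.
by case: (boolP (a \in t d)) => [/(subsetP (st d dout)) | _]; rewrite ?inE ?andbF ?andbT.
Qed.

Lemma splitU_restr (G1 G2 : G) (t1 t2 : D -> X) :
  oplus G1 G2 = Some (gtype xs u b r) ->
  (forall d, off_xs xs r d -> oplus (t1 d) (t2 d) = Some (xtype xs x u b r d)) ->
  splitU u (restr_un G1 t1) (restr_un G2 t2).
Proof.
move=> hG ht; apply/forallP => p; rewrite !ffunE; apply: split_set_by => d dp.
rewrite /keep_un; case e: (xs_index d) => [i|].
  by apply: (oplus_memr hG); rewrite inE /= -(xs_index_Some e).
by apply: (oplus_memr (ht d _)); [rewrite -xs_index_None e | rewrite inE /= upd_eq].
Qed.

Lemma splitB_restr (G1 G2 : G) (t1 t2 : D -> X) :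
  oplus G1 G2 = Some (gtype xs u b r) ->
  (forall d, off_xs xs r d -> oplus (t1 d) (t2 d) = Some (xtype xs x u b r d)) ->
  splitB b (restr_bin G1 t1 true) (restr_bin G2 t2 false).
Proof.
move=> hG ht.
have off d : xs_index d = None -> off_xs xs r d by rewrite -xs_index_None => ->.
apply/forallP => f; rewrite !ffunE; apply: split_set_by => -[d1 d2] de.
rewrite /keep_bin /=; case e1: (xs_index d1) => [i|]; case e2: (xs_index d2) => [j|].
- by apply: (oplus_memr hG); rewrite inE /= -(xs_index_Some e1) -(xs_index_Some e2).
- apply: (oplus_memr (ht _ (off _ e2))).
  by rewrite inE /= upd_eq upd_tnth // -(xs_index_Some e1).
- apply: (oplus_memr (ht _ (off _ e1))).
  by rewrite inE /= upd_eq upd_tnth // -(xs_index_Some e2).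
- case: eqP => [ed | //]; subst d2.
  by apply: (oplus_memr (ht _ (off _ e1))); rewrite inE /= upd_eq.
Qed.

Lemma sat_star_of_types E (C1 C2 : cstar A F n) (t1 t2 : D -> X) :
  sat u b r (Eform A F xs E) ->
  oplus (cs_F C1) (cs_F C2) = Some (gtype xs u b r) ->
  (forall d, off_xs xs r d -> oplus (t1 d) (t2 d) = Some (xtype xs x u b r d)) ->
  (forall T, cnt_holds (cs_s C1 T) #|fiber (off_xs xs r) t1 T|) ->
  (forall T, cnt_holds (cs_s C2 T) #|fiber (off_xs xs r) t2 T|) ->
  sat u b r (Star (cs_form xs x E C1) (cs_form xs x E C2)).
Proof.
move=> hE hG ht h1 h2; apply/existsP; exists (restr_un (cs_F C1) t1).
apply/existsP; exists (restr_un (cs_F C2) t2).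
apply/existsP; exists (restr_bin (cs_F C1) t1 true).
apply/existsP; exists (restr_bin (cs_F C2) t2 false).
apply/and4P; split; [exact: splitU_restr | exact: splitB_restr | |].
- apply: sat_cs_form_restr => // [|d dout]; first exact: oplus_subl hG.
  exact: oplus_subl (ht d dout).
- apply: sat_cs_form_restr => // [|d dout]; first exact: oplus_subr hG.
  exact: oplus_subr (ht d dout).
Qed.

End Splitting.

Theorem lemma17 (A F : finType) (n : nat) (xs : n.-tuple nat) (x : nat)
  (E : seq (nat * 'I_n))
  (Hvars : uniq (x :: xs)) (HE : E_wf xs x E)
  (C1 C2 : cstar A F n) (HC1 : cs_wf C1) (HC2 : cs_wf C2) :
  forall (C3 : cstar A F n), cs_wf C3 -> ERes C1 C2 C3 ->
  forall (D : finType) (u : {ffun A -> {set D}}) (b : {ffun F -> {set D * D}})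
         (rho : nat -> D),
    sat u b rho (cs_form xs x E C3) ->
    sat u b rho (Star (cs_form xs x E C1) (cs_form xs x E C2)).
Proof.
move=> C3 _ hR D u b rho; have x_fresh : x \notin xs by case/andP: Hvars.
rewrite sat_cs_form // => /and4P[hE /eqP hF3 r_inj /forallP hC3].
have [t1 [t2 [ht h1 h2]]] := ERes_split_types hR hC3.
apply: (sat_star_of_types x_fresh r_inj hE _ ht h1 h2).
by case: hR => -> _; congr Some; exact: esym hF3.
Qed.
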